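(* Let $a,b,c,e$ be positive integers with $e\leqslant c$. If there exists an $\mathrm{IHS}(a,be;c)$, then there exists an integer Heffter array $\mathrm{H}(ac,bc;be,ae)$.
   Context: An integer Heffter array set $\mathrm{IHS}(m,n;c)$ is a collection of $c$ completely filled $m\times n$ arrays with integer entries such that the absolute values of all $mnc$ entries (taken over all $c$ arrays) are exactly $1,2,\ldots,mnc$, each occurring exactly once, and in every array the entries of each row and of each column sum to $0$. An integer Heffter array $\mathrm{H}(m,n;s,k)$ is an $m\times n$ partially filled array whose entries are integers from $\{\pm1,\ldots,\pm nk\}$ such that each row contains exactly $s$ filled cells, each column contains exactly $k$ filled cells, no two entries have the same absolute value, and the entries of every row and every column sum to $0$. *)

From mathcomp Require Import all_boot all_order all_algebra.
Set Implicit Arguments. Unset Strict Implicit. Unset Printing Implicit Defensive.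
Import GRing.Theory Num.Theory.
Local Open Scope ring_scope.

Definition is_IHS (m n c : nat) (A : 'I_c -> 'M[int]_(m, n)) : Prop :=
  [/\ (forall t i j, (0 < `|A t i j|)%N /\ (`|A t i j| <= m * n * c)%N),
      (forall v : nat, (0 < v)%N -> (v <= m * n * c)%N ->
          exists t i j, `|A t i j|%N = v),
      (forall t i j t' i' j', `|A t i j|%N = `|A t' i' j'|%N ->
          (t, i, j) = (t', i', j')) &
      (forall t i, \sum_(j < n) A t i j = 0) /\
      (forall t j, \sum_(i < m) A t i j = 0)].

Definition IHS_exists (m n c : nat) : Prop :=
  exists A : 'I_c -> 'M[int]_(m, n), is_IHS A.

(* A partially filled m x n array: None = empty cell, Some x = cell filled with x.
   Integer Heffter array H(m,n;s,k). *)
Definition is_heffter (m n s k : nat) (A : 'M[option int]_(m, n)) : Prop :=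
  [/\ (forall i j x, A i j = Some x -> (0 < `|x|)%N /\ (`|x| <= n * k)%N),
      (forall i, #|[set j | A i j != None]| = s),
      (forall j, #|[set i | A i j != None]| = k),
      (forall i j i' j' x x', A i j = Some x -> A i' j' = Some x' ->
          `|x|%N = `|x'|%N -> (i, j) = (i', j')) &
      (forall i, \sum_(j < n) odflt 0 (A i j) = 0) /\
      (forall j, \sum_(i < m) odflt 0 (A i j) = 0)].

Definition heffter_exists (m n s k : nat) : Prop :=
  exists A : 'M[option int]_(m, n), is_heffter s k A.

From mathcomp Require Import all_boot all_order all_algebra zify.
Set Implicit Arguments. Unset Strict Implicit. Unset Printing Implicit Defensive.
Import GRing.Theory.

(* Index the rows of H(ac, bc; be, ae) by pairs (r, i) in Z_c x [0, a) and its
   columns by pairs (s, j) in Z_c x [0, b), so that H is a c x c array of a x b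
   blocks.  Cut each array A_r of the IHS into e vertical slices of width b and
   put the k-th slice of A_r in block (r, r + k) for k < e, leaving the other
   blocks empty.  Block row r then holds each row of A_r exactly once, and block
   column s holds whole columns of the arrays A_(s-k), so all line sums vanish,
   while each row (column) meets e filled blocks of width b (height a). *)

Section OrdPair.

Variables p q : nat.

Lemma ord_pair_subproof (hi : 'I_q) (lo : 'I_p) : hi * p + lo < p * q.
Proof. by have := ltn_ord hi; have := ltn_ord lo; nia. Qed.

Definition ord_pair (hi : 'I_q) (lo : 'I_p) : 'I_(p * q) :=
  Ordinal (ord_pair_subproof hi lo).

Lemma ord_mul_gt0 (x : 'I_(p * q)) : 0 < p.
Proof. by have := ltn_ord x; nia. Qed.

Lemma ord_hi_subproof (x : 'I_(p * q)) : x %/ p < q.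
Proof. by rewrite ltn_divLR ?(ord_mul_gt0 x) // [q * p]mulnC. Qed.

Lemma ord_lo_subproof (x : 'I_(p * q)) : x %% p < p.
Proof. by rewrite ltn_pmod ?(ord_mul_gt0 x). Qed.

Definition ord_hi (x : 'I_(p * q)) : 'I_q := Ordinal (ord_hi_subproof x).
Definition ord_lo (x : 'I_(p * q)) : 'I_p := Ordinal (ord_lo_subproof x).

Lemma ord_hi_pair hi lo : ord_hi (ord_pair hi lo) = hi.
Proof.
apply: val_inj => /=; have p_gt0 : 0 < p by apply: leq_ltn_trans (ltn_ord lo).
by rewrite divnMDl // divn_small ?addn0.
Qed.

Lemma ord_lo_pair hi lo : ord_lo (ord_pair hi lo) = lo.
Proof. by apply: val_inj => /=; rewrite modnMDl modn_small. Qed.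

Lemma ord_pair_hi_lo x : ord_pair (ord_hi x) (ord_lo x) = x.
Proof. by apply: val_inj => /=; rewrite -divn_eq. Qed.

Lemma ord_pairP x : exists hi lo, x = ord_pair hi lo.
Proof. by exists (ord_hi x), (ord_lo x); rewrite ord_pair_hi_lo. Qed.

Lemma big_ord_pair (R : Type) (idx : R) (op : Monoid.com_law idx)
    (F : 'I_(p * q) -> R) :
  \big[op/idx]_(x < p * q) F x
    = \big[op/idx]_(hi < q) \big[op/idx]_(lo < p) F (ord_pair hi lo).
Proof.
rewrite pair_bigA (reindex (fun x => ord_pair x.1 x.2)) //=.
exists (fun x => (ord_hi x, ord_lo x)) => [[hi lo] _ | x _] /=.
  by rewrite ord_hi_pair ord_lo_pair.
exact: ord_pair_hi_lo.
Qed.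

End OrdPair.

Lemma big_ord_insub (R : Type) (idx : R) (op : Monoid.law idx) n e
    (F : 'I_e -> R) :
  e <= n ->
  \big[op/idx]_(k < n) oapp F idx (insub (val k)) = \big[op/idx]_(k < e) F k.
Proof.
move=> le_en; transitivity (\big[op/idx]_(k < e) oapp F idx (insub (val k))).
  rewrite (big_ord_widen _ (fun k => oapp F idx (insub k)) le_en) [RHS]big_mkcond.
  by apply: eq_bigr => k _; case: ltnP => // k_ge_e; rewrite insubN // -ltnNge.
by apply: eq_bigr => k _; rewrite valK.
Qed.

Section Construction.

Variables (a b c e : nat) (A : 'I_c.+1 -> 'M[int]_(a, b * e)).
Hypothesis le_ec : e <= c.+1.

(* The block at offset [k] right of the diagonal holds slice [k] of the IHS
   array when [k < e], and is empty otherwise. *)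
Definition band (k : 'I_c.+1) : option 'I_e := insub (val k).

Definition heffter_of_IHS : 'M[option int]_(a * c.+1, b * c.+1) :=
  \matrix_(I, J) omap (fun k => A (ord_hi I) (ord_lo I) (ord_pair k (ord_lo J)))
                      (band (ord_hi J - ord_hi I)%R).

Lemma heffter_of_IHS_pair r i s j :
  heffter_of_IHS (ord_pair r i) (ord_pair s j)
    = omap (fun k => A r i (ord_pair k j)) (band (s - r)%R).
Proof. by rewrite mxE !ord_hi_pair !ord_lo_pair. Qed.

Lemma big_band_shift (R : Type) (idx : R) (op : Monoid.com_law idx)
    (F : 'I_e -> R) (r : 'I_c.+1) :
  \big[op/idx]_s oapp F idx (band (s - r)%R) = \big[op/idx]_(k < e) F k.
Proof.
rewrite (reindex_inj (addIr r)) /=.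
under eq_bigr do rewrite addrK.
exact: big_ord_insub.
Qed.

Lemma big_band_reflect (R : Type) (idx : R) (op : Monoid.com_law idx)
    (F : 'I_e -> R) (s : 'I_c.+1) :
  \big[op/idx]_r oapp F idx (band (s - r)%R) = \big[op/idx]_(k < e) F k.
Proof.
rewrite (reindex_inj (subrI s)) /=.
under eq_bigr do rewrite subKr.
exact: big_ord_insub.
Qed.

Lemma heffter_of_IHS_row_card I :
  #|[set J | heffter_of_IHS I J != None]| = b * e.
Proof.
have [r [i ->]] := ord_pairP I.
rewrite -sum1dep_card big_mkcond /= big_ord_pair.
transitivity (\sum_(s < c.+1) \sum_(j < b) oapp (fun=> 1) 0 (band (s - r)%R)).
  apply: eq_bigr => s _; apply: eq_bigr => j _.
  by rewrite heffter_of_IHS_pair; case: band.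
rewrite exchange_big /=.
under eq_bigr do rewrite big_band_shift // big_const_ord iter_addn_0 mul1n.
by rewrite sum_nat_const card_ord.
Qed.

Lemma heffter_of_IHS_col_card J :
  #|[set I | heffter_of_IHS I J != None]| = a * e.
Proof.
have [s [j ->]] := ord_pairP J.
rewrite -sum1dep_card big_mkcond /= big_ord_pair.
transitivity (\sum_(r < c.+1) \sum_(i < a) oapp (fun=> 1) 0 (band (s - r)%R)).
  apply: eq_bigr => r _; apply: eq_bigr => i _.
  by rewrite heffter_of_IHS_pair; case: band.
rewrite exchange_big /=.
under eq_bigr do rewrite big_band_reflect // big_const_ord iter_addn_0 mul1n.
by rewrite sum_nat_const card_ord.
Qed.

Lemma val_band k t : band k = Some t -> val t = val k.
Proof. by rewrite /band; case: insubP => // u _ <- [->]. Qed.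

Lemma sum_odflt_omap (T : Type) (V : nmodType) (n : nat) (F : T -> 'I_n -> V) o :
  (\sum_(i < n) odflt 0 (omap (F^~ i) o) = oapp (fun k => \sum_(i < n) F k i) 0 o)%R.
Proof. by case: o => [k|] //=; rewrite big1. Qed.

Lemma heffter_of_IHS_row_sum I :
  (forall r i, \sum_(x < b * e) A r i x = 0)%R ->
  (\sum_J odflt 0 (heffter_of_IHS I J) = 0)%R.
Proof.
move=> sum_row0; have [r [i ->]] := ord_pairP I.
rewrite big_ord_pair.
under eq_bigr do under eq_bigr do rewrite heffter_of_IHS_pair.
under eq_bigr do rewrite sum_odflt_omap.
by rewrite big_band_shift // -big_ord_pair sum_row0.
Qed.

Lemma heffter_of_IHS_col_sum J :
  (forall r x, \sum_(i < a) A r i x = 0)%R ->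
  (\sum_I odflt 0 (heffter_of_IHS I J) = 0)%R.
Proof.
move=> sum_col0; have [s [j ->]] := ord_pairP J.
rewrite big_ord_pair big1 // => r _.
under eq_bigr do rewrite heffter_of_IHS_pair.
by rewrite sum_odflt_omap; case: band => //= k; rewrite sum_col0.
Qed.

Lemma heffter_of_IHS_bound I J x :
  (forall t i y, 0 < `|A t i y| /\ `|A t i y| <= a * (b * e) * c.+1) ->
  heffter_of_IHS I J = Some x -> 0 < `|x| /\ `|x| <= b * c.+1 * (a * e).
Proof.
move=> bound; rewrite mxE; case: band => //= k [<-].
by have := bound (ord_hi I) (ord_lo I) (ord_pair k (ord_lo J)); nia.
Qed.

Lemma heffter_of_IHS_inj I J I' J' x x' :
  (forall t i y t' i' y', `|A t i y| = `|A t' i' y'| -> (t, i, y) = (t', i', y')) ->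
  heffter_of_IHS I J = Some x -> heffter_of_IHS I' J' = Some x' ->
  `|x| = `|x'| -> (I, J) = (I', J').
Proof.
move=> inj; have [r [i ->]] := ord_pairP I; have [s [j ->]] := ord_pairP J.
have [r' [i' ->]] := ord_pairP I'; have [s' [j' ->]] := ord_pairP J'.
rewrite !heffter_of_IHS_pair.
case band_k: band => [k|] //= [<-]; case band_k': band => [k'|] //= [<-].
move=> /inj [eq_r eq_i eq_val_kj]; subst r' i'.
have eq_kj : ord_pair k j = ord_pair k' j' by apply: val_inj; exact: eq_val_kj.
have := congr1 (@ord_lo _ _) eq_kj; have := congr1 (@ord_hi _ _) eq_kj.
rewrite !ord_hi_pair !ord_lo_pair => eq_k <-; rewrite -{}eq_k in band_k'.
suff /subIr -> : (s - r = s' - r)%R by [].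
by apply: val_inj; rewrite -(val_band band_k) -(val_band band_k').
Qed.

Lemma heffter_of_IHS_is_heffter :
  is_IHS A -> is_heffter (b * e) (a * e) heffter_of_IHS.
Proof.
case=> bound _ inj [sum_row0 sum_col0]; split.
- by move=> I J x; apply: heffter_of_IHS_bound.
- exact: heffter_of_IHS_row_card.
- exact: heffter_of_IHS_col_card.
- by move=> I J I' J' x x'; apply: heffter_of_IHS_inj.
- by split=> [I | J]; [apply: heffter_of_IHS_row_sum | apply: heffter_of_IHS_col_sum].
Qed.

End Construction.

Theorem lemma4p1 (a b c e : nat) :
  (0 < a)%N -> (0 < b)%N -> (0 < c)%N -> (0 < e)%N -> (e <= c)%N ->
  IHS_exists a (b * e) c ->
  heffter_exists (a * c) (b * c) (b * e) (a * e).
Proof.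
move=> _ _ c_gt0 _ le_ec [A IHS_A].
case: c c_gt0 le_ec A IHS_A => // c _ le_ec A IHS_A.
by exists (heffter_of_IHS A); apply: heffter_of_IHS_is_heffter.
Qed.
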